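(* Let $n\ge3$. Every nonempty element of $K^{\infty}_n$ has a unique canonical form (its smallest representative word in length-lexicographic order with $y_1<\cdots<y_n$), and the canonical forms are exactly the words $$y^{a_0}_{i_1}y^{a_1}_{i_1-1}\cdots y^{a_{k_1}}_{i_1-k_1}\;y^{b_0}_{i_2}y^{b_1}_{i_2-1}\cdots y^{b_{k_2}}_{i_2-k_2}\cdots y^{h_0}_{i_p}y^{h_1}_{i_p-1}\cdots y^{h_{k_p}}_{i_p-k_p}$$ with all exponents positive and $i_j-k_j<i_{j+1}$ for $j=1,\dots,p-1$, where in addition, as a special case, a factor $y_n^{h}$ may be immediately followed by a factor $y_{n-2}^{j}$. Equivalently, the canonical forms are the words in which every two consecutive letters $y_ay_b$ satisfy $b\ge a-1$ or $(a,b)=(n,n-2)$.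
   Context: $K^{\infty}_n=\langle y_1,\dots,y_n\mid y_iy_j=y_jy_i\ (j+2\le i\le n-1),\ y_ny_k=y_ky_n\ (1\le k\le n-3)\rangle$. *)

From Stdlib Require Import Relation_Operators.
From mathcomp Require Import all_boot.
Set Implicit Arguments. Unset Strict Implicit. Unset Printing Implicit Defensive.

(* Letters: the generator y_i is encoded by the natural number i, 1 <= i <= n.
   Words are sequences of letters; a word over the alphabet of K^oo_n: *)
Definition word (n : nat) (w : seq nat) : bool := all (fun a => 0 < a <= n) w.

(* The defining relations of K^oo_n:
   y_i y_j = y_j y_i  for j+2 <= i <= n-1,
   y_n y_k = y_k y_n  for 1 <= k <= n-3. *)
Definition defrel (n i j : nat) : bool :=
  [&& 1 <= j, j + 2 <= i & i <= n - 1] || [&& i == n, 1 <= j & j <= n - 3].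

Definition step (n : nat) (u v : seq nat) : Prop :=
  exists (p q : seq nat) (a b : nat),
    (defrel n a b || defrel n b a) /\ u = p ++ a :: b :: q /\ v = p ++ b :: a :: q.

(* equality in the monoid K^oo_n: the congruence generated by the relations *)
Definition keq (n : nat) : seq nat -> seq nat -> Prop :=
  clos_refl_sym_trans (seq nat) (step n).

Fixpoint lexle (u v : seq nat) : bool :=
  match u, v with
  | [::], _ => true
  | _ :: _, [::] => false
  | a :: u', b :: v' => (a < b) || ((a == b) && lexle u' v')
  end.

Definition lenlex_le (u v : seq nat) : bool :=
  (size u < size v) || ((size u == size v) && lexle u v).

Definition canonical (n : nat) (c : seq nat) : Prop :=
  forall v, keq n c v -> lenlex_le c v.

Definition local_cond (n : nat) (c : seq nat) : bool :=
  [forall i : 'I_(size c).-1,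
     let a := nth 0 c i in let b := nth 0 c i.+1 in
     (a <= b.+1) || ((a == n) && (b == n - 2))].

(* A pair of adjacent letters y_a y_b violating the condition (b < a - 1 and
   (a, b) <> (n, n - 2)) is always an instance of a defining relation, so it
   can be swapped into the lexicographically smaller y_b y_a; insertion sort
   therefore turns every word into an equivalent word satisfying the
   condition, and a canonical word must satisfy it.  Conversely, for two
   letters a, b that do not commute the subsequence of a's and b's is
   invariant under the relations, and a word satisfying the condition is the
   lexicographically least word with prescribed such subsequences: if a
   smaller word began with y < x, every letter of the given word before its
   first y would have to commute with y, which the condition forbids. *)

From Stdlib Require Import Relation_Operators.
From mathcomp Require Import all_boot.
From mathcomp Require Import zify.
Set Implicit Arguments. Unset Strict Implicit.

Section Invariants.

Variables (A T : Type) (R : A -> A -> Prop).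

Lemma clos_rst_invariant (f : A -> T) :
  (forall u v, R u v -> f u = f v) ->
  forall u v, clos_refl_sym_trans A R u v -> f u = f v.
Proof. by move=> Rf u v; elim=> {u v} [u v /Rf||u v _ ->|u v w _ -> _ ->]. Qed.

End Invariants.

Definition canon_rel (n a b : nat) : bool :=
  (a <= b.+1) || ((a == n) && (b == n - 2)).

Definition commuting (n a b : nat) : bool := defrel n a b || defrel n b a.

Definition proj_eq (n : nat) (u v : seq nat) : Prop :=
  forall a b, ~~ commuting n a b -> filter (pred2 a b) u = filter (pred2 a b) v.

Lemma commuting_irr n a : ~~ commuting n a a.
Proof. rewrite /commuting /defrel; lia. Qed.

Lemma commutingC n a b : commuting n a b = commuting n b a.
Proof. by rewrite /commuting orbC. Qed.

Lemma ltn_canon_rel n a b : a < b -> canon_rel n a b.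
Proof. rewrite /canon_rel; lia. Qed.

Lemma not_canon_rel_gtn n a b : ~~ canon_rel n a b -> b < a.
Proof. rewrite /canon_rel; lia. Qed.

Lemma defrel_not_canon_rel n a b :
  0 < b -> a <= n -> ~~ canon_rel n a b -> defrel n a b.
Proof. rewrite /canon_rel /defrel; lia. Qed.

Lemma canon_rel_descent_noncommuting n x y :
  canon_rel n x y -> y < x -> ~~ commuting n x y.
Proof. rewrite /canon_rel /commuting /defrel; lia. Qed.

Lemma canon_rel_jump_noncommuting n x y z :
  canon_rel n x z -> z < y -> y < x -> ~~ commuting n x y.
Proof. rewrite /canon_rel /commuting /defrel; lia. Qed.

Lemma keq_size n u v : keq n u v -> size u = size v.
Proof.
apply: clos_rst_invariant => {}u {}v [p [q [a [b [_ [-> ->]]]]]].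
by rewrite !size_cat.
Qed.

Lemma keq_proj_eq n u v : keq n u v -> proj_eq n u v.
Proof.
move=> uv x y xy; move: u v uv; apply: clos_rst_invariant.
move=> u v [p [q [a [b [ab [-> ->]]]]]]; rewrite !filter_cat /=.
suff : ~~ (pred2 x y a && pred2 x y b) by rewrite /=; case: (_ || _) (_ || _) => [] [].
apply: contraL ab => /andP[] /pred2P[->|->] /pred2P[->|->];
  rewrite -/(commuting n _ _) ?commuting_irr //; by rewrite commutingC.
Qed.

Lemma keq_cons n c u v : keq n u v -> keq n (c :: u) (c :: v).
Proof.
elim=> {u v} [u v [p [q [a [b [ab [-> ->]]]]]]|u|u v _ IH|u v w _ IH1 _ IH2].
- by apply: rst_step; exists (c :: p), q, a, b.
- exact: rst_refl.
- exact: rst_sym.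
- exact: rst_trans IH1 IH2.
Qed.

Lemma canon_path_first_noncommuting n x s y :
  path (canon_rel n) x s -> y < x -> commuting n x y ->
  exists2 z, ~~ commuting n z y & ohead (filter (pred2 z y) (x :: s)) != Some y.
Proof.
elim: s x => [|z s IH] x.
  by move=> _ yx _; exists y; rewrite ?commuting_irr //= orbb gtn_eqF.
move=> /andP[xz zs] yx xy; have [zy|yz|zy] := ltngtP z y.
- by rewrite (negbTE (canon_rel_jump_noncommuting xz zy yx)) in xy.
- case zy: (commuting n z y); last first.
    exists z; rewrite ?zy //= eqxx.
    by case: ifP => _; apply/eqP => -[]; lia.
  have [t ty head_t] := IH z zs yz zy; exists t => //.
  have x_t : x != t by apply: contraNneq ty => <-.
  by rewrite [filter _ (x :: _)]/= (negbTE x_t) (gtn_eqF yx).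
- by subst z; rewrite (negbTE (canon_rel_descent_noncommuting xz yx)) in xy.
Qed.

Lemma sorted_proj_eq_lexle n c v :
  sorted (canon_rel n) c -> proj_eq n c v -> lexle c v.
Proof.
elim: c v => [|x c IH] // [|y v] sc cv.
  by have := cv x x (commuting_irr n x); rewrite /= eqxx.
rewrite /=; case: (ltngtP x y) => [//|yx|xy]; last first.
  subst y; apply: IH (path_sorted sc) _ => a b ab.
  by have := cv a b ab; rewrite /=; case: ifP => // _ [].
have xy : commuting n x y.
  apply: contraT => xy; have := cv x y xy.
  by rewrite /= !eqxx orbT /= => -[yx']; rewrite yx' ltnn in yx.
have [z zy] := canon_path_first_noncommuting sc yx xy.
by rewrite (cv z y zy) /= eqxx orbT /= eqxx.
Qed.

Lemma canonical_lexle n c v : canonical n c -> keq n c v -> lexle c v.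
Proof. by move=> cc cv; have := cc v cv; rewrite /lenlex_le (keq_size cv) ltnn eqxx. Qed.

Lemma sorted_canonical n c : sorted (canon_rel n) c -> canonical n c.
Proof.
move=> sc v cv; rewrite /lenlex_le (keq_size cv) ltnn eqxx /=.
exact: sorted_proj_eq_lexle sc (keq_proj_eq cv).
Qed.

Fixpoint canon_insert (n x : nat) (t : seq nat) : seq nat :=
  if t is c :: t' then
    if canon_rel n x c then x :: t else c :: canon_insert n x t'
  else [:: x].

Fixpoint canon_sort (n : nat) (s : seq nat) : seq nat :=
  if s is x :: s' then canon_insert n x (canon_sort n s') else [::].

Lemma all_canon_insert (P : pred nat) n x t :
  all P (canon_insert n x t) = P x && all P t.
Proof. by elim: t => [|c t IH] //=; case: ifP => _ //=; rewrite IH andbCA. Qed.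

Lemma all_canon_sort (P : pred nat) n s : all P (canon_sort n s) = all P s.
Proof. by elim: s => [|x s IH] //=; rewrite all_canon_insert IH. Qed.

Lemma path_canon_insert n x b t :
  path (canon_rel n) b t -> canon_rel n b x ->
  path (canon_rel n) b (canon_insert n x t).
Proof.
elim: t b => [|c t IH] b /=; first by rewrite andbT.
move=> /andP[bc ct] bx; case: ifP => xc /=; first by rewrite bx xc ct.
by rewrite bc IH // ltn_canon_rel // (not_canon_rel_gtn (negbT xc)).
Qed.

Lemma sorted_canon_sort n s : sorted (canon_rel n) (canon_sort n s).
Proof.
elim: s => [|x s] //=; case: (canon_sort n s) => [|c t] //= ct.
case: ifP => xc /=; first by rewrite xc.
by rewrite path_canon_insert // ltn_canon_rel // (not_canon_rel_gtn (negbT xc)).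
Qed.

Lemma keq_swap n x y s :
  0 < y -> x <= n -> ~~ canon_rel n x y -> keq n [:: x, y & s] [:: y, x & s].
Proof.
move=> y0 xn xy; apply: rst_step; exists [::], s, x, y.
by rewrite defrel_not_canon_rel.
Qed.

Lemma keq_canon_insert n x t : word n (x :: t) -> keq n (x :: t) (canon_insert n x t).
Proof.
elim: t => [|c t IH] /=; first by move=> _; apply: rst_refl.
move=> /and3P[/andP[x0 xn] /andP[c0 cn] wt]; case: ifP => xc; first exact: rst_refl.
apply: rst_trans (keq_swap _ c0 xn (negbT xc)) (keq_cons _ _).
by apply: IH; rewrite /word /= x0 xn.
Qed.

Lemma keq_canon_sort n s : word n s -> keq n s (canon_sort n s).
Proof.
elim: s => [|x s IH] /=; first by move=> _; apply: rst_refl.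
move=> /andP[wx ws]; apply: rst_trans (keq_cons _ (IH ws)) _.
by apply: keq_canon_insert; rewrite /word /= wx all_canon_sort.
Qed.

Lemma canonical_behead n x c : canonical n (x :: c) -> canonical n c.
Proof.
move=> xc v cv; have := xc _ (keq_cons x cv).
by rewrite /lenlex_le /= ltnS eqSS ltnn eqxx.
Qed.

Lemma canonical_sorted n c : word n c -> canonical n c -> sorted (canon_rel n) c.
Proof.
elim: c => [|x [|y c] IH] //= /and3P[/andP[_ xn] /andP[y0 yn] wc] xyc.
case xy: (canon_rel n x y) => /=.
  by apply: IH (canonical_behead xyc); rewrite /word /= y0 yn.
have yx := not_canon_rel_gtn (negbT xy).
have := canonical_lexle xyc (keq_swap _ y0 xn (negbT xy)).
by rewrite /= ltnNge (ltnW yx) (gtn_eqF yx).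
Qed.

Lemma local_cond_sorted n c : local_cond n c = sorted (canon_rel n) c.
Proof.
case: c => [|x s]; first by apply/forallP => -[].
apply/forallP/(pathP 0) => /= cond i; first by move=> lt_is; apply: cond (Ordinal lt_is).
exact: cond (ltn_ord i).
Qed.

Lemma lexle_anti u v : lexle u v -> lexle v u -> u = v.
Proof.
elim: u v => [|a u IH] [|b v] //=.
by case: (ltngtP a b) => //= -> uv vu; rewrite (IH v uv vu).
Qed.

Theorem proposition2 (n : nat) (hn : 3 <= n) :
  (forall w : seq nat, word n w -> w != [::] ->
     exists! c : seq nat, keq n w c /\ canonical n c)
  /\
  (forall c : seq nat, word n c -> c != [::] ->
     (canonical n c <-> local_cond n c)).
Proof.
split=> [w ww _ | c wc _]; last first.
  by rewrite local_cond_sorted; split; [apply: canonical_sorted | apply: sorted_canonical].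
have wcs := keq_canon_sort ww; have sorted_w := sorted_canon_sort n w.
exists (canon_sort n w); split=> [|c [wc cc]]; first by split; last apply: sorted_canonical.
have sc : keq n (canon_sort n w) c := rst_trans _ _ _ _ _ (rst_sym _ _ _ _ wcs) wc.
exact: lexle_anti (canonical_lexle (sorted_canonical sorted_w) sc)
                  (canonical_lexle cc (rst_sym _ _ _ _ sc)).
Qed.
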